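(* Let $-2<k<2$ and $(x_0,y_0,z_0)\in E_k$. If the $\Gamma$-orbit of $(x_0,y_0,z_0)$ is infinite, then it is dense in $E_k$.
   Context: $M$ is a torus with one boundary component; $\pi_1(M)$ is free on $X,Y$, $K=XYX^{-1}Y^{-1}$. $E=\operatorname{Hom}(\pi_1(M),\mathrm{SU}(2))/\mathrm{SU}(2)$ is identified via $[\sigma]\mapsto(\operatorname{tr}\sigma(X),\operatorname{tr}\sigma(Y),\operatorname{tr}\sigma(XY))$ with $\{(x,y,z)\in[-2,2]^3:-2\le x^2+y^2+z^2-xyz-2\le2\}$, and $E_k=\{(x,y,z)\in E:x^2+y^2+z^2-xyz-2=k\}$, with the topology induced from $\mathbb{R}^3$. $\Gamma$ is the mapping class group of $M$ fixing $\partial M$; it acts on $E$ and is generated by $\tau_X(x,y,z)=(x,z,xz-y)$ and $\tau_Y(x,y,z)=(z,y,yz-x)$, which preserve each $E_k$. *)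

From Stdlib Require Import Reals List.
Open Scope R_scope.

Definition pt := (R * R * R)%type.

Definition kappa (p : pt) : R :=
  let '(x, y, z) := p in x * x + y * y + z * z - x * y * z - 2.

Definition in_cube (p : pt) : Prop :=
  let '(x, y, z) := p in
  -2 <= x <= 2 /\ -2 <= y <= 2 /\ -2 <= z <= 2.

Definition E (p : pt) : Prop := in_cube p /\ -2 <= kappa p <= 2.

Definition E_k (k : R) (p : pt) : Prop := E p /\ kappa p = k.

Definition tauX (p : pt) : pt := let '(x, y, z) := p in (x, z, x * z - y).
Definition tauY (p : pt) : pt := let '(x, y, z) := p in (z, y, y * z - x).
Definition tauX_inv (p : pt) : pt := let '(x, y, z) := p in (x, x * y - z, y).
Definition tauY_inv (p : pt) : pt := let '(x, y, z) := p in (y * x - z, y, x).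

(* The Gamma-orbit of p0: Gamma is generated by tauX, tauY, so the orbit is
   the smallest set containing p0 closed under the generators and their inverses. *)
Inductive orbit (p0 : pt) : pt -> Prop :=
| orbit_base : orbit p0 p0
| orbit_X : forall p, orbit p0 p -> orbit p0 (tauX p)
| orbit_Y : forall p, orbit p0 p -> orbit p0 (tauY p)
| orbit_Xi : forall p, orbit p0 p -> orbit p0 (tauX_inv p)
| orbit_Yi : forall p, orbit p0 p -> orbit p0 (tauY_inv p).

Definition finite_set (S : pt -> Prop) : Prop :=
  exists l : list pt, forall p, S p -> In p l.

Definition dist3 (p q : pt) : R :=
  let '(x, y, z) := p in let '(x', y', z') := q in
  sqrt ((x - x') ^ 2 + (y - y') ^ 2 + (z - z') ^ 2).

Definition dense_in (S T : pt -> Prop) : Prop :=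
  forall p, T p -> forall eps, eps > 0 -> exists q, S q /\ dist3 p q < eps.

From Stdlib Require Import Reals Lra Lia Psatz ZArith List Classical ClassicalEpsilon FinFun Rtopology.
Open Scope R_scope.

(* Fix [a] with [a^2 < k + 2].  The slice [x = a] of [E_k] is an ellipse, parametrised as
   [(a, r cos phi, r cos (phi + theta))] with [a = 2 cos theta], and [tauX] rotates it:
   [phi -> phi + theta].  If [theta / (2 PI)] has no denominator [m <= M], Dirichlet's theorem makes
   the [tauX]-orbit of any point of the ellipse [(2 PI r / M)]-dense in it.  The ellipses vary
   continuously with [a], so if orbit points have x-coordinates tending to [a] while avoiding the
   finitely many M-resonant values, for every [M], then the whole slice [x = a] lies in the orbit
   closure; conversely, such orbit points exist when every slice [x = a'] with [a'] near [a] lies in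
   the closure.  An infinite orbit has points on nonresonant ellipses; rotating along them and a
   compactness argument produce such a limit [b], with [b^2 < k + 2], for the y-coordinate (the swap
   [(x, y, z) -> (y, x, z)] exchanges [tauX] and [tauY]).  Passing from the slice [y = b] to [x = 0]
   and from there to every slice [y = b'] with [b'^2 < k + 2] covers [E_k]: its remaining points
   have [y^2 = k + 2], hence [x = 0]. *)

Lemma kappa_lt_2_bound x y z : -2 <= x <= 2 -> -2 <= y <= 2 ->
  kappa (x, y, z) < 2 -> -2 < z < 2.
Proof.
  unfold kappa; intros Hx Hy H.
  assert (Hxy : -4 <= x * y <= 4) by nra.
  split.
  - destruct (Rlt_or_le (-2) z) as [|Hz]; [assumption|].
    assert (x * x + y * y + z * z - x * y * z - 2 - 2
            = (x + y) * (x + y) + (-2 - z) * (2 + x * y - z)) by ring.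
    assert (0 <= (-2 - z) * (2 + x * y - z)) by (apply Rmult_le_pos; lra).
    pose proof (Rle_0_sqr (x + y)); unfold Rsqr in *; lra.
  - destruct (Rlt_or_le z 2) as [|Hz]; [assumption|].
    assert (x * x + y * y + z * z - x * y * z - 2 - 2
            = (x - y) * (x - y) + (z - 2) * (z + 2 - x * y)) by ring.
    assert (0 <= (z - 2) * (z + 2 - x * y)) by (apply Rmult_le_pos; lra).
    pose proof (Rle_0_sqr (x - y)); unfold Rsqr in *; lra.
Qed.

Lemma E_k_intro k x y z : -2 <= k < 2 -> kappa (x, y, z) = k ->
  -2 <= x <= 2 -> -2 <= y <= 2 -> E_k k (x, y, z).
Proof.
  intros Hk Hkap Hx Hy.
  pose proof (kappa_lt_2_bound x y z Hx Hy ltac:(lra)).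
  repeat split; lra.
Qed.

Lemma E_k_cycle k x y z : E_k k (x, y, z) -> E_k k (y, z, x).
Proof.
  unfold E_k, E, in_cube, kappa; cbn.
  intros [[(Hx & Hy & Hz) Hb] Hkap].
  replace (y * y + z * z + x * x - y * z * x - 2)
    with (x * x + y * y + z * z - x * y * z - 2) by ring.
  repeat split; lra.
Qed.

Lemma E_k_x_sq_le k x y z : E_k k (x, y, z) -> x * x <= k + 2.
Proof.
  unfold E_k, E, in_cube, kappa; cbn.
  intros [[(Hx & Hy & Hz) _] Hkap].
  assert (0 <= y * y + z * z - x * y * z); [|lra].
  pose proof (Rle_0_sqr (y - z)); pose proof (Rle_0_sqr (y + z)); unfold Rsqr in *.
  destruct (Rle_dec 0 (y * z)).
  - assert (0 <= (2 - x) * (y * z)) by (apply Rmult_le_pos; lra). lra.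
  - assert (0 <= (2 + x) * - (y * z)) by (apply Rmult_le_pos; lra). lra.
Qed.

Lemma orbit_E_k k p0 p : -2 <= k < 2 -> E_k k p0 -> orbit p0 p -> E_k k p.
Proof.
  intros Hk H0 Hp.
  induction Hp as [|p _ IH|p _ IH|p _ IH|p _ IH]; [assumption|..];
    destruct p as [[x y] z]; pose proof IH as [[(Hx & Hy & Hz) _] Hkap];
    unfold kappa in Hkap; cbn in Hkap |- *.
  - apply E_k_intro; try lra. unfold kappa; rewrite <- Hkap; ring.
  - apply E_k_intro; try lra. unfold kappa; rewrite <- Hkap; ring.
  - apply (E_k_cycle k y x (x * y - z)), E_k_intro; try lra.
    unfold kappa; rewrite <- Hkap; ring.
  - apply (E_k_cycle k x (y * x - z) y), (E_k_cycle k y x (y * x - z)), E_k_intro;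
      try lra.
    unfold kappa; rewrite <- Hkap; ring.
Qed.

Lemma orbit_cycle p0 x y z : orbit p0 (x, y, z) -> orbit p0 (y, z, x).
Proof.
  intros H.
  replace (y, z, x) with (tauY_inv (tauX (x, y, z))) by (cbn; f_equal; f_equal; ring).
  apply orbit_Yi, orbit_X, H.
Qed.

Lemma E_k_lift k x y : -2 <= k < 2 -> x * x + y * y <= k + 2 ->
  exists z, E_k k (x, y, z).
Proof.
  intros Hk Hxy.
  set (D := x * x * (y * y) - 4 * (x * x + y * y - 2 - k)).
  assert (HD : 0 <= D) by (unfold D; nra).
  exists ((x * y + sqrt D) / 2).
  apply E_k_intro; try nra.
  unfold kappa; cbn.
  pose proof (sqrt_sqrt D HD).
  replace (x * x + y * y + (x * y + sqrt D) / 2 * ((x * y + sqrt D) / 2)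
           - x * y * ((x * y + sqrt D) / 2) - 2)
    with (x * x + y * y - 2 + (sqrt D * sqrt D - x * x * (y * y)) / 4) by field.
  unfold D in *; lra.
Qed.

Lemma E_k_x_eq_0_of_y_sq k x y z : k < 2 -> E_k k (x, y, z) -> y * y = k + 2 -> x = 0.
Proof.
  intros Hk [_ Hkap] Hy.
  unfold kappa in Hkap; cbn in Hkap.
  (* the level equation reads (2x - yz)^2 + (4 - y^2) z^2 = 4 (k + 2 - y^2) *)
  assert (Hsum : (2 * x - y * z) * (2 * x - y * z) + (4 - y * y) * (z * z) = 0)
    by nra.
  pose proof (Rle_0_sqr (2 * x - y * z)); pose proof (Rle_0_sqr z); unfold Rsqr in *.
  assert (0 <= (4 - y * y) * (z * z)) by (apply Rmult_le_pos; lra).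
  assert (z * z = 0) by nra.
  assert (z = 0) by nra.
  subst z. nra.
Qed.

Definition swap_xy (p : pt) : pt := let '(x, y, z) := p in (y, x, z).

Lemma swap_xy_involutive p : swap_xy (swap_xy p) = p.
Proof. destruct p as [[x y] z]; reflexivity. Qed.

Lemma orbit_swap_xy p0 p : orbit p0 p -> orbit (swap_xy p0) (swap_xy p).
Proof.
  induction 1 as [|[[x y] z] _ IH|[[x y] z] _ IH|[[x y] z] _ IH|[[x y] z] _ IH].
  - constructor.
  - exact (orbit_Y _ _ IH).
  - exact (orbit_X _ _ IH).
  - exact (orbit_Yi _ _ IH).
  - exact (orbit_Xi _ _ IH).
Qed.

Lemma E_k_swap_xy k p : E_k k p -> E_k k (swap_xy p).
Proof.
  destruct p as [[x y] z]; unfold E_k, E, in_cube, kappa; cbn.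
  replace (y * y + x * x + z * z - y * x * z - 2)
    with (x * x + y * y + z * z - x * y * z - 2) by ring.
  tauto.
Qed.

Lemma Rabs_cos_sub_le p q : Rabs (cos p - cos q) <= Rabs (p - q).
Proof.
  destruct (MVT_abs cos (fun c => - sin c) q p) as [c [-> _]].
  { intros c _; apply derivable_pt_lim_cos. }
  rewrite Rabs_Ropp.
  assert (Rabs (sin c) <= 1) by (apply Rabs_le, SIN_bound).
  pose proof (Rabs_pos (p - q)); nra.
Qed.

Lemma Rabs_mul_cos_sub_le r r' u u' : 0 <= r' ->
  Rabs (r * cos u - r' * cos u') <= Rabs (r - r') + r' * Rabs (u - u').
Proof.
  intros Hr'.
  replace (r * cos u - r' * cos u') with ((r - r') * cos u + r' * (cos u - cos u')) by ring.
  eapply Rle_trans; [apply Rabs_triang|].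
  rewrite !Rabs_mult, (Rabs_pos_eq r') by assumption.
  assert (Rabs (cos u) <= 1) by (apply Rabs_le, COS_bound).
  pose proof (Rabs_cos_sub_le u u'); pose proof (Rabs_pos (r - r')).
  nra.
Qed.

Lemma cos_add_2PI_IZR x J : cos (x + 2 * PI * IZR J) = cos x.
Proof.
  induction J using Z.peano_ind.
  - now rewrite Rmult_0_r, Rplus_0_r.
  - rewrite succ_IZR, <- IHJ, <- (cos_period (x + 2 * PI * IZR J) 1).
    f_equal; cbn; ring.
  - rewrite <- Z.sub_1_r, minus_IZR, <- IHJ, <- (cos_period _ 1).
    f_equal; cbn; ring.
Qed.

Lemma polar_coords u v : exists phi,
  u = sqrt (u * u + v * v) * cos phi /\ v = sqrt (u * u + v * v) * sin phi.
Proof.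
  set (r := sqrt (u * u + v * v)).
  assert (Hr2 : r * r = u * u + v * v) by (apply sqrt_sqrt; nra).
  assert (Hr0 : 0 <= r) by apply sqrt_pos.
  destruct (Req_dec r 0) as [Hr|Hr].
  { exists 0; rewrite Hr in Hr2 |- *; rewrite Rmult_0_l; split; nra. }
  set (w := u / r).
  assert (Hu : u = w * r) by (unfold w; field; exact Hr).
  assert (Hww : w * w <= 1).
  { apply (Rmult_le_reg_r (r * r)); [nra|]. rewrite Rmult_1_l. nra. }
  assert (Hw : -1 <= w <= 1) by nra.
  assert (Hsin : sqrt (1 - w²) = Rabs v / r).
  { replace (1 - w²) with ((v / r)²)
      by (unfold w, Rsqr; field_simplify_eq; [lra|exact Hr]).
    rewrite sqrt_Rsqr_abs; unfold Rdiv; rewrite Rabs_mult, (Rabs_pos_eq (/ r)); [reflexivity|].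
    apply Rlt_le, Rinv_0_lt_compat; lra. }
  destruct (Rle_dec 0 v).
  - exists (acos w); rewrite cos_acos, sin_acos, Hsin, Rabs_pos_eq by lra.
    split; [lra|field; exact Hr].
  - exists (- acos w); rewrite cos_neg, sin_neg, cos_acos, sin_acos, Hsin, Rabs_left by lra.
    split; [lra|field; exact Hr].
Qed.

Lemma Rabs_lt_sqrt u v : Rabs u < sqrt v <-> u * u < v.
Proof.
  rewrite <- sqrt_Rsqr_abs; split.
  - apply sqrt_lt_0_alt.
  - intros H; apply sqrt_lt_1_alt; split; [apply Rle_0_sqr|exact H].
Qed.

Lemma sqrt_k_plus_2_lt_2 k : k < 2 -> sqrt (k + 2) < 2.
Proof.
  intros Hk; destruct (Rle_lt_dec 0 (k + 2)) as [Hk2|Hk2].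
  - pose proof (sqrt_sqrt (k + 2) Hk2); pose proof (sqrt_pos (k + 2)); nra.
  - rewrite sqrt_neg_0; lra.
Qed.

Lemma continuity_pt_eps_delta f a : continuity_pt f a ->
  forall eps, 0 < eps -> exists delta, 0 < delta /\
    forall a', Rabs (a' - a) < delta -> Rabs (f a' - f a) < eps.
Proof.
  intros Hf eps Heps.
  destruct (Hf eps Heps) as [delta [Hdelta Hclose]].
  exists delta; split; [exact Hdelta|].
  intros a' Ha'.
  destruct (Req_dec a' a) as [->|Hne].
  - unfold Rminus; rewrite Rplus_opp_r, Rabs_R0; exact Heps.
  - apply Hclose; repeat split; auto.
Qed.

Lemma PI_div_INR_lt eps : 0 < eps -> exists M, (1 <= M)%nat /\ PI / INR M < eps.
Proof.
  intros Heps; pose proof PI_RGT_0.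
  destruct (INR_unbounded (PI / eps)) as [M HM].
  assert (HM0 : 0 < INR M) by (pose proof (Rdiv_lt_0_compat PI eps); lra).
  exists M; split; [destruct M; [cbn in HM0; lra|lia]|].
  apply (Rmult_lt_reg_r (INR M / eps)); [apply Rdiv_lt_0_compat; lra|].
  replace (PI / INR M * (INR M / eps)) with (PI / eps) by (field; lra).
  replace (eps * (INR M / eps)) with (INR M) by (field; lra).
  lra.
Qed.

Lemma separated_point (L : list R) lo hi : lo < hi ->
  let mu := (hi - lo) / 2 ^ S (length L) in
  exists c, lo + mu <= c /\ c + mu <= hi /\ forall l, In l L -> mu <= Rabs (l - c).
Proof.
  intros Hlh; induction L as [|l L IH]; cbv zeta in *.
  - exists ((lo + hi) / 2); cbn; split; [lra|]; split; [lra|]; intros l [].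
  - destruct IH as [c (Hlo & Hhi & Hsep)].
    set (mu := (hi - lo) / 2 ^ S (length L)) in *.
    replace ((hi - lo) / 2 ^ S (length (l :: L))) with (mu / 2)
      by (unfold mu; cbn [length pow]; field; apply pow_nonzero; lra).
    assert (0 < mu) by (apply Rdiv_lt_0_compat; [lra|apply pow_lt; lra]).
    destruct (Rle_dec l c).
    + exists (c + mu / 2); split; [lra|]; split; [lra|].
      intros l' [<-|Hl']; [rewrite Rabs_left1; lra|].
      specialize (Hsep l' Hl'); unfold Rabs in *; destruct Rcase_abs, Rcase_abs; lra.
    + exists (c - mu / 2); split; [lra|]; split; [lra|].
      intros l' [<-|Hl']; [rewrite Rabs_right; lra|].
      specialize (Hsep l' Hl'); unfold Rabs in *; destruct Rcase_abs, Rcase_abs; lra.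
Qed.

(** * Dirichlet's approximation theorem *)

Lemma pigeonhole n (f : nat -> nat) : (forall i, (i <= n)%nat -> (f i < n)%nat) ->
  exists i j, (i < j <= n)%nat /\ f i = f j.
Proof.
  intros Hf.
  assert (Hninj : ~ bInjective (S n) f).
  { intros Hinj.
    apply bInjective_bSurjective in Hinj; [|intros i Hi; specialize (Hf i ltac:(lia)); lia].
    destruct (Hinj n ltac:(lia)) as [i [Hi Hfi]].
    specialize (Hf i ltac:(lia)); lia. }
  apply NNPP; intros Hno; apply Hninj; intros i j Hi Hj Hij.
  destruct (lt_eq_lt_dec i j) as [[Hlt|Heq]|Hgt]; [|exact Heq|]; exfalso; apply Hno.
  - exists i, j; split; [lia|exact Hij].
  - exists j, i; split; [lia|auto].
Qed.

Lemma dirichlet_approx theta M : (1 <= M)%nat ->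
  exists m J, (1 <= m <= M)%nat /\ Rabs (INR m * theta - 2 * PI * IZR J) < 2 * PI / INR M.
Proof.
  intros HM.
  pose proof PI_RGT_0.
  assert (HMr : 1 <= INR M) by (apply (le_INR 1); exact HM).
  set (t := fun i => INR i * theta / (2 * PI)).
  set (frac := fun i => t i - IZR (Zfloor (t i))).
  assert (Hfrac : forall i, 0 <= frac i < 1).
  { intros i; unfold frac; pose proof (Zfloor_bound (t i)); lra. }
  assert (Hbox : forall i, (0 <= Zfloor (INR M * frac i) < Z.of_nat M)%Z).
  { intros i; specialize (Hfrac i); pose proof (Zfloor_bound (INR M * frac i)); split.
    - apply Zfloor_lub; nra.
    - apply lt_IZR; rewrite <- INR_IZR_INZ; nra. }
  destruct (pigeonhole M (fun i => Z.to_nat (Zfloor (INR M * frac i)))) as [i [j [Hij Hbij]]].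
  { intros i _; specialize (Hbox i); lia. }
  apply Z2Nat.inj in Hbij; [|apply Hbox|apply Hbox].
  assert (Hclose : Rabs (frac j - frac i) < 1 / INR M).
  { pose proof (Zfloor_bound (INR M * frac i)); pose proof (Zfloor_bound (INR M * frac j)).
    rewrite Hbij in *.
    apply Rabs_def1; apply (Rmult_lt_reg_l (INR M)); try lra;
      field_simplify; lra. }
  exists (j - i)%nat, (Zfloor (t j) - Zfloor (t i))%Z; split; [lia|].
  replace (INR (j - i) * theta - 2 * PI * IZR (Zfloor (t j) - Zfloor (t i)))
    with (2 * PI * (frac j - frac i))
    by (unfold frac, t; rewrite minus_INR, minus_IZR by lia; field; lra).
  rewrite Rabs_mult, (Rabs_pos_eq (2 * PI)) by lra.
  replace (2 * PI / INR M) with (2 * PI * (1 / INR M)) by (field; lra).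
  apply Rmult_lt_compat_l; lra.
Qed.

Lemma multiples_approx d t : d <> 0 -> exists n : Z, Rabs (IZR n * d - t) <= Rabs d / 2.
Proof.
  intros Hd.
  exists (Zfloor (t / d + 1 / 2)).
  pose proof (Zfloor_bound (t / d + 1 / 2)).
  replace (IZR (Zfloor (t / d + 1 / 2)) * d - t)
    with ((IZR (Zfloor (t / d + 1 / 2)) - t / d) * d) by (field; exact Hd).
  rewrite Rabs_mult.
  assert (Rabs (IZR (Zfloor (t / d + 1 / 2)) - t / d) <= 1 / 2) by (apply Rabs_le; lra).
  pose proof (Rabs_pos d); nra.
Qed.

Lemma rotation_net theta M : (1 <= M)%nat ->
  (forall m J, (1 <= m <= M)%nat -> INR m * theta <> 2 * PI * IZR J) ->
  forall t, exists N J : Z, Rabs (IZR N * theta - 2 * PI * IZR J - t) <= PI / INR M.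
Proof.
  intros HM Hnres t.
  pose proof PI_RGT_0.
  destruct (dirichlet_approx theta M HM) as [m [J [Hm Hd]]].
  set (d := INR m * theta - 2 * PI * IZR J) in Hd.
  assert (Hd0 : d <> 0) by (unfold d; specialize (Hnres m J Hm); lra).
  destruct (multiples_approx d t Hd0) as [n Hn].
  exists (n * Z.of_nat m)%Z, (n * J)%Z.
  rewrite !mult_IZR, <- INR_IZR_INZ.
  replace (IZR n * INR m * theta - 2 * PI * (IZR n * IZR J) - t) with (IZR n * d - t)
    by (unfold d; ring).
  replace (PI / INR M) with (2 * PI / INR M / 2) by lra.
  lra.
Qed.

(** * The slices [x = a] as rotated ellipses *)

Definition ellipse_pt (a r t phi : R) : pt := (a, r * cos phi, r * cos (phi + t)).

Definition rot_angle (a : R) : R := acos (a / 2).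

Definition ellipse_radius (k a : R) : R := sqrt ((k + 2 - a * a) / (1 - a * a / 4)).

Definition level_pt (k a phi : R) : pt := ellipse_pt a (ellipse_radius k a) (rot_angle a) phi.

Lemma cos_rot_angle a : -2 <= a <= 2 -> a = 2 * cos (rot_angle a).
Proof. intros Ha; unfold rot_angle; rewrite cos_acos; lra. Qed.

Lemma tauX_ellipse_pt a r t phi : a = 2 * cos t ->
  tauX (ellipse_pt a r t phi) = ellipse_pt a r t (phi + t).
Proof.
  intros ->; unfold ellipse_pt, tauX; f_equal.
  replace (phi + t + t) with ((phi + t) + t) by ring.
  rewrite (cos_plus (phi + t) t).
  replace phi with ((phi + t) - t) at 2 by ring.
  rewrite cos_minus; ring.
Qed.

Lemma tauX_inv_ellipse_pt a r t phi : a = 2 * cos t ->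
  tauX_inv (ellipse_pt a r t phi) = ellipse_pt a r t (phi - t).
Proof.
  intros ->; unfold ellipse_pt, tauX_inv.
  replace (phi - t + t) with phi by ring.
  rewrite cos_plus, cos_minus; f_equal; f_equal; ring.
Qed.

Lemma orbit_ellipse_pt_rotate p0 a r t phi : a = 2 * cos t ->
  orbit p0 (ellipse_pt a r t phi) ->
  forall N : Z, orbit p0 (ellipse_pt a r t (phi + IZR N * t)).
Proof.
  intros Ha Hphi N.
  induction N using Z.peano_ind.
  - now rewrite Rmult_0_l, Rplus_0_r.
  - replace (phi + IZR (Z.succ N) * t) with (phi + IZR N * t + t)
      by (rewrite succ_IZR; ring).
    rewrite <- tauX_ellipse_pt by exact Ha.
    now apply orbit_X.
  - replace (phi + IZR (Z.pred N) * t) with (phi + IZR N * t - t)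
      by (rewrite <- Z.sub_1_r, minus_IZR; ring).
    rewrite <- tauX_inv_ellipse_pt by exact Ha.
    now apply orbit_Xi.
Qed.

Lemma ellipse_pt_add_2PI_IZR a r t phi J :
  ellipse_pt a r t (phi + 2 * PI * IZR J) = ellipse_pt a r t phi.
Proof.
  unfold ellipse_pt.
  replace (phi + 2 * PI * IZR J + t) with (phi + t + 2 * PI * IZR J) by ring.
  now rewrite !cos_add_2PI_IZR.
Qed.

Definition dist1 (p q : pt) : R :=
  let '(x, y, z) := p in let '(x', y', z') := q in
  Rabs (x - x') + Rabs (y - y') + Rabs (z - z').

Lemma dist1_triangle p q s : dist1 p s <= dist1 p q + dist1 q s.
Proof.
  destruct p as [[x y] z], q as [[x' y'] z'], s as [[x'' y''] z'']; cbn.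
  pose proof (Rabs_triang (x - x') (x' - x'')).
  pose proof (Rabs_triang (y - y') (y' - y'')).
  pose proof (Rabs_triang (z - z') (z' - z'')).
  replace (x - x'') with (x - x' + (x' - x'')) by ring.
  replace (y - y'') with (y - y' + (y' - y'')) by ring.
  replace (z - z'') with (z - z' + (z' - z'')) by ring.
  lra.
Qed.

Lemma dist1_ellipse_pt a r t phi a' r' t' phi' : 0 <= r' ->
  dist1 (ellipse_pt a r t phi) (ellipse_pt a' r' t' phi')
  <= Rabs (a - a') + 2 * Rabs (r - r') + r' * (2 * Rabs (phi - phi') + Rabs (t - t')).
Proof.
  intros Hr'; cbn.
  pose proof (Rabs_mul_cos_sub_le r r' phi phi' Hr').
  pose proof (Rabs_mul_cos_sub_le r r' (phi + t) (phi' + t') Hr').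
  pose proof (Rabs_triang (phi - phi') (t - t')).
  replace (phi + t - (phi' + t')) with (phi - phi' + (t - t')) in * by ring.
  nra.
Qed.

Lemma level_pt_rep k a y z : k < 2 -> E_k k (a, y, z) -> exists phi, (a, y, z) = level_pt k a phi.
Proof.
  intros Hk HE.
  pose proof (E_k_x_sq_le k a y z HE) as Ha2.
  destruct HE as [_ Hkap]; unfold kappa in Hkap; cbn in Hkap.
  set (S := sqrt (1 - (a / 2)²)).
  assert (HS2 : S * S = 1 - (a / 2)²) by (apply sqrt_sqrt; unfold Rsqr; nra).
  assert (HS : 0 < S) by (apply sqrt_lt_R0; unfold Rsqr; nra).
  set (v := (y * (a / 2) - z) / S).
  destruct (polar_coords y v) as [phi [Hy Hv]].
  replace (sqrt (y * y + v * v)) with (ellipse_radius k a) in Hy, Hv.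
  2:{ unfold ellipse_radius; f_equal.
      unfold v; rewrite <- Hkap; field_simplify_eq; [|split; nra].
      replace (S ^ 2) with (1 - a * a / 4) by (rewrite <- Rsqr_pow2; unfold Rsqr in *; lra).
      field. }
  exists phi; unfold level_pt, ellipse_pt, rot_angle.
  rewrite cos_plus, cos_acos, sin_acos by (unfold Rsqr in *; nra).
  fold S.
  replace (ellipse_radius k a * (cos phi * (a / 2) - sin phi * S))
    with (y * (a / 2) - v * S) by (rewrite Hy, Hv; ring).
  rewrite <- Hy; unfold v; f_equal; field; lra.
Qed.

Lemma ellipse_radius_nonneg k a : 0 <= ellipse_radius k a.
Proof. apply sqrt_pos. Qed.

Lemma ellipse_radius_pos k a : a * a < k + 2 -> k < 2 -> 0 < ellipse_radius k a.
Proof.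
  intros Ha Hk; apply sqrt_lt_R0, Rdiv_lt_0_compat; lra.
Qed.

Lemma ellipse_radius_le k a : k <= 2 -> a * a < 4 -> ellipse_radius k a <= sqrt (k + 2).
Proof.
  intros Hk Ha; apply sqrt_le_1_alt.
  apply (Rmult_le_reg_r (1 - a * a / 4)); [lra|].
  unfold Rdiv; rewrite Rmult_assoc, Rinv_l by lra.
  pose proof (Rle_0_sqr a); unfold Rsqr in *; nra.
Qed.

Lemma level_pt_continuous k a : -2 < k < 2 -> a * a < k + 2 ->
  forall eps, 0 < eps -> exists delta, 0 < delta /\
    forall a' phi, Rabs (a' - a) < delta -> a' * a' < 4 ->
    dist1 (level_pt k a phi) (level_pt k a' phi) < eps.
Proof.
  intros Hk Ha eps Heps.
  assert (Hr : continuity_pt (ellipse_radius k) a).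
  { apply (continuity_pt_comp (fun a => (k + 2 - a * a) / (1 - a * a / 4)) sqrt).
    - reg; lra.
    - apply continuity_pt_sqrt, Rlt_le, Rdiv_lt_0_compat; lra. }
  assert (Ht : continuity_pt rot_angle a).
  { apply (continuity_pt_comp (fun a => a / 2) acos).
    - reg.
    - apply derivable_continuous_pt, derivable_pt_acos; split; nra. }
  destruct (continuity_pt_eps_delta _ _ Hr (eps / 8)) as [d1 [Hd1 Hr']]; [lra|].
  destruct (continuity_pt_eps_delta _ _ Ht (eps / 8)) as [d2 [Hd2 Ht']]; [lra|].
  exists (Rmin (eps / 4) (Rmin d1 d2)); split.
  { repeat apply Rmin_pos; lra. }
  intros a' phi Ha' Ha'4.
  pose proof (Rmin_l (eps / 4) (Rmin d1 d2)); pose proof (Rmin_r (eps / 4) (Rmin d1 d2)).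
  pose proof (Rmin_l d1 d2); pose proof (Rmin_r d1 d2).
  specialize (Hr' a' ltac:(lra)); specialize (Ht' a' ltac:(lra)).
  pose proof (ellipse_radius_le k a' ltac:(lra) Ha'4); pose proof (sqrt_k_plus_2_lt_2 k ltac:(lra)).
  eapply Rle_lt_trans; [apply dist1_ellipse_pt, ellipse_radius_nonneg|].
  rewrite Rminus_diag, Rabs_R0, (Rabs_minus_sym a), (Rabs_minus_sym (ellipse_radius k a)),
    (Rabs_minus_sym (rot_angle a)).
  pose proof (ellipse_radius_nonneg k a').
  pose proof (Rabs_pos (rot_angle a' - rot_angle a)).
  nra.
Qed.

(* The values [a] whose [rot_angle a] is a multiple of [2 * PI / m] for some [1 <= m <= M]. *)
Definition resonant (M : nat) : list R :=
  flat_map (fun m => map (fun j => 2 * cos (2 * PI * INR j / INR m)) (seq 0 m)) (seq 1 M).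

Lemma resonant_mono M M' a : (M <= M')%nat -> In a (resonant M) -> In a (resonant M').
Proof.
  unfold resonant; intros HM Ha.
  apply in_flat_map in Ha as [m [Hm Ha]].
  apply in_flat_map; exists m; split; [|exact Ha].
  apply in_seq in Hm; apply in_seq; lia.
Qed.

Lemma rot_angle_nonresonant M a : -2 <= a <= 2 -> ~ In a (resonant M) ->
  forall m J, (1 <= m <= M)%nat -> INR m * rot_angle a <> 2 * PI * IZR J.
Proof.
  intros Ha Hnres m J Hm Heq; apply Hnres.
  pose proof PI_RGT_0.
  assert (Hmr : 1 <= INR m) by (apply (le_INR 1); lia).
  pose proof (acos_bound (a / 2)) as Hbound; fold (rot_angle a) in Hbound.
  assert (HJ : (0 <= J < Z.of_nat m)%Z).
  { split; [apply le_IZR | apply lt_IZR; rewrite <- INR_IZR_INZ]; nra. }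
  assert (Ha' : a = 2 * cos (2 * PI * INR (Z.to_nat J) / INR m)).
  { rewrite INR_IZR_INZ, Z2Nat.id, <- Heq by lia.
    replace (INR m * rot_angle a / INR m) with (rot_angle a) by (field; lra).
    apply cos_rot_angle, Ha. }
  unfold resonant; apply in_flat_map; exists m; split; [apply in_seq; lia|].
  apply in_map_iff; exists (Z.to_nat J); split; [now rewrite Ha'|].
  apply in_seq; lia.
Qed.

Lemma orbit_level_pt_net k p0 a M phi0 : -2 <= a <= 2 -> (1 <= M)%nat ->
  ~ In a (resonant M) -> orbit p0 (level_pt k a phi0) ->
  forall phi, exists psi, orbit p0 (level_pt k a psi) /\
    dist1 (level_pt k a phi) (level_pt k a psi) <= 2 * ellipse_radius k a * (PI / INR M).
Proof.
  intros Ha HM Hnres Horb phi.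
  destruct (rotation_net (rot_angle a) M HM (rot_angle_nonresonant M a Ha Hnres) (phi - phi0))
    as [N [J HNJ]].
  exists (phi0 + IZR N * rot_angle a); split.
  { apply orbit_ellipse_pt_rotate; [apply cos_rot_angle, Ha | exact Horb]. }
  unfold level_pt.
  replace (phi0 + IZR N * rot_angle a)
    with (phi0 + IZR N * rot_angle a - 2 * PI * IZR J + 2 * PI * IZR J) by ring.
  rewrite ellipse_pt_add_2PI_IZR.
  eapply Rle_trans; [apply dist1_ellipse_pt, ellipse_radius_nonneg|].
  rewrite !Rminus_diag, Rabs_R0.
  replace (phi - (phi0 + IZR N * rot_angle a - 2 * PI * IZR J))
    with (- (IZR N * rot_angle a - 2 * PI * IZR J - (phi - phi0))) by ring.
  rewrite Rabs_Ropp.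
  pose proof (ellipse_radius_nonneg k a).
  nra.
Qed.

Lemma orbit_level_pt_y_near k p0 a M phi0 : -2 <= a <= 2 -> (1 <= M)%nat ->
  ~ In a (resonant M) -> orbit p0 (level_pt k a phi0) ->
  forall c, - ellipse_radius k a <= c <= ellipse_radius k a -> 0 < ellipse_radius k a ->
  exists y z, orbit p0 (a, y, z) /\ Rabs (c - y) <= 2 * ellipse_radius k a * (PI / INR M).
Proof.
  intros Ha HM Hnres Horb c Hc Hr.
  set (r := ellipse_radius k a) in *.
  assert (Hcos : cos (acos (c / r)) = c / r).
  { apply cos_acos.
    split; [apply (Rmult_le_reg_r r)|apply (Rmult_le_reg_r r)]; try lra;
      unfold Rdiv; rewrite Rmult_assoc, Rinv_l; lra. }
  destruct (orbit_level_pt_net k p0 a M phi0 Ha HM Hnres Horb (acos (c / r)))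
    as [psi [Hpsi Hnear]].
  exists (r * cos psi), (r * cos (psi + rot_angle a)); split; [exact Hpsi|].
  eapply Rle_trans; [|exact Hnear].
  unfold level_pt, ellipse_pt; cbn -[Rabs]; fold r.
  rewrite Hcos.
  replace (r * (c / r)) with c by (field; lra).
  pose proof (Rabs_pos (a - a)).
  pose proof (Rabs_pos (r * cos (acos (c / r) + rot_angle a) - r * cos (psi + rot_angle a))).
  lra.
Qed.

Definition adherent (S : pt -> Prop) (p : pt) : Prop :=
  forall eps, eps > 0 -> exists q, S q /\ dist3 p q < eps.

Lemma dist3_le_dist1 p q : dist3 p q <= dist1 p q.
Proof.
  destruct p as [[x y] z], q as [[x' y'] z']; cbn -[pow].
  pose proof (Rabs_pos (x - x')); pose proof (Rabs_pos (y - y')); pose proof (Rabs_pos (z - z')).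
  rewrite <- (sqrt_square (Rabs (x - x') + Rabs (y - y') + Rabs (z - z'))) by lra.
  apply sqrt_le_1_alt.
  rewrite <- (pow2_abs (x - x')), <- (pow2_abs (y - y')), <- (pow2_abs (z - z')).
  nra.
Qed.

Lemma Rabs_sub_x_le_dist3 x y z x' y' z' :
  Rabs (x - x') <= dist3 (x, y, z) (x', y', z').
Proof.
  cbn -[pow]; rewrite <- sqrt_Rsqr_abs; apply sqrt_le_1_alt.
  rewrite Rsqr_pow2; pose proof (pow2_ge_0 (y - y')); pose proof (pow2_ge_0 (z - z')).
  lra.
Qed.

Lemma dist3_swap_xy p q : dist3 (swap_xy p) (swap_xy q) = dist3 p q.
Proof. destruct p as [[x y] z], q as [[x' y'] z']; cbn; f_equal; ring. Qed.

Lemma adherent_orbit_swap_xy p0 p :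
  adherent (orbit p0) p -> adherent (orbit (swap_xy p0)) (swap_xy p).
Proof.
  intros H eps Heps.
  destruct (H eps Heps) as [q [Hq Hd]].
  exists (swap_xy q); split; [now apply orbit_swap_xy|].
  now rewrite dist3_swap_xy.
Qed.

Definition nonresonant_x_limit (p0 : pt) (a : R) : Prop :=
  forall (M : nat) eps, eps > 0 ->
  exists x y z, orbit p0 (x, y, z) /\ ~ In x (resonant M) /\ Rabs (x - a) < eps.

Definition nonresonant_y_limit (p0 : pt) (b : R) : Prop :=
  forall (M : nat) eps, eps > 0 ->
  exists x y z, orbit p0 (x, y, z) /\ ~ In y (resonant M) /\ Rabs (y - b) < eps.

Definition x_slice_adherent (k : R) (p0 : pt) (a : R) : Prop :=
  forall y z, E_k k (a, y, z) -> adherent (orbit p0) (a, y, z).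

Definition y_slice_adherent (k : R) (p0 : pt) (b : R) : Prop :=
  forall x z, E_k k (x, b, z) -> adherent (orbit p0) (x, b, z).

Lemma x_slice_of_nonresonant_x_limit k p0 a : -2 < k < 2 -> E_k k p0 -> a * a < k + 2 ->
  nonresonant_x_limit p0 a -> x_slice_adherent k p0 a.
Proof.
  intros Hk H0 Ha Hlim y z Hayz eps Heps.
  pose proof PI_RGT_0.
  destruct (level_pt_rep k a y z ltac:(lra) Hayz) as [phi ->].
  destruct (level_pt_continuous k a Hk Ha (eps / 2) ltac:(lra)) as [delta [Hdelta Hcont]].
  destruct (PI_div_INR_lt (eps / 8)) as [M [HM1 HM]]; [lra|].
  destruct (Hlim M delta Hdelta) as (a' & y' & z' & Horb & Hnres & Ha').
  pose proof (orbit_E_k k p0 _ ltac:(lra) H0 Horb) as HE'.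
  pose proof (E_k_x_sq_le k a' y' z' HE').
  destruct (level_pt_rep k a' y' z' ltac:(lra) HE') as [phi0 Hphi0]; rewrite Hphi0 in Horb.
  destruct (orbit_level_pt_net k p0 a' M phi0 ltac:(nra) HM1 Hnres Horb phi)
    as [psi [Hpsi Hnear]].
  exists (level_pt k a' psi); split; [exact Hpsi|].
  eapply Rle_lt_trans; [apply dist3_le_dist1|].
  eapply Rle_lt_trans; [apply (dist1_triangle _ (level_pt k a' phi))|].
  specialize (Hcont a' phi Ha' ltac:(lra)).
  assert (0 < PI / INR M) by (apply Rdiv_lt_0_compat; [lra|apply lt_0_INR; lia]).
  pose proof (ellipse_radius_le k a' ltac:(lra) ltac:(lra)).
  pose proof (sqrt_k_plus_2_lt_2 k ltac:(lra)).
  nra.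
Qed.

Lemma nonresonant_x_limit_of_adherent p0 a r : r > 0 ->
  (forall a', Rabs (a' - a) < r -> exists y z, adherent (orbit p0) (a', y, z)) ->
  nonresonant_x_limit p0 a.
Proof.
  intros Hr Hadh M eps Heps.
  set (w := Rmin r eps / 2).
  pose proof (Rmin_l r eps); pose proof (Rmin_r r eps).
  assert (Hw : 0 < w) by (apply Rlt_gt in Hr; pose proof (Rmin_pos r eps Hr Heps); unfold w; lra).
  destruct (separated_point (resonant M) (a - w) (a + w)) as [c (Hlo & Hhi & Hsep)]; [lra|].
  set (mu := (a + w - (a - w)) / 2 ^ S (length (resonant M))) in *.
  assert (Hmu : 0 < mu) by (apply Rdiv_lt_0_compat; [lra|apply pow_lt; lra]).
  destruct (Hadh c) as [y [z Hc]]; [apply Rabs_def1; unfold w in *; lra|].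
  destruct (Hc mu Hmu) as [[[x' y'] z'] [Horb Hd]].
  pose proof (Rabs_sub_x_le_dist3 c y z x' y' z') as Hx'.
  exists x', y', z'; split; [exact Horb|split].
  - intros Hin; specialize (Hsep _ Hin); rewrite Rabs_minus_sym in Hsep; lra.
  - assert (Hcx : Rabs (c - x') < mu) by lra.
    apply Rabs_def2 in Hcx; apply Rabs_def1; unfold w in *; lra.
Qed.

Lemma y_slice_adherent_swap_xy k p0 c :
  x_slice_adherent k p0 c -> y_slice_adherent k (swap_xy p0) c.
Proof.
  intros Hx x z Hxz.
  apply (adherent_orbit_swap_xy p0 (c, x, z)), Hx.
  exact (E_k_swap_xy k (x, c, z) Hxz).
Qed.

Lemma x_slice_of_y_slice k p0 a b : -2 < k < 2 -> E_k k p0 -> a * a + b * b < k + 2 ->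
  y_slice_adherent k p0 b -> x_slice_adherent k p0 a.
Proof.
  intros Hk H0 Hab Hy.
  assert (Hb : 0 <= b * b) by nra.
  apply (x_slice_of_nonresonant_x_limit k p0 a Hk H0 ltac:(lra)).
  assert (Ha : Rabs a < sqrt (k + 2 - b * b)) by (apply Rabs_lt_sqrt; lra).
  apply (nonresonant_x_limit_of_adherent p0 a (sqrt (k + 2 - b * b) - Rabs a) ltac:(lra)).
  intros a' Ha'.
  assert (Ha'b : a' * a' + b * b <= k + 2).
  { enough (a' * a' < k + 2 - b * b) by lra.
    apply Rabs_lt_sqrt.
    pose proof (Rabs_triang (a' - a) a); replace (a' - a + a) with a' in * by ring; lra. }
  destruct (E_k_lift k a' b ltac:(lra) Ha'b) as [z Hz].
  exists b, z; exact (Hy a' z Hz).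
Qed.

Lemma y_slice_of_x_slice k p0 a b : -2 < k < 2 -> E_k k p0 -> a * a + b * b < k + 2 ->
  x_slice_adherent k p0 a -> y_slice_adherent k p0 b.
Proof.
  intros Hk H0 Hab Hx.
  rewrite <- (swap_xy_involutive p0).
  apply y_slice_adherent_swap_xy, (x_slice_of_y_slice k _ b a Hk); [|lra|].
  - exact (E_k_swap_xy k p0 H0).
  - now apply y_slice_adherent_swap_xy.
Qed.

Lemma y_slice_of_nonresonant_y_limit k p0 b : -2 < k < 2 -> E_k k p0 -> b * b < k + 2 ->
  nonresonant_y_limit p0 b -> y_slice_adherent k p0 b.
Proof.
  intros Hk H0 Hb Hlim.
  rewrite <- (swap_xy_involutive p0).
  apply y_slice_adherent_swap_xy, (x_slice_of_nonresonant_x_limit k _ b Hk); [|exact Hb|].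
  - exact (E_k_swap_xy k p0 H0).
  - intros M eps Heps.
    destruct (Hlim M eps Heps) as (x & y & z & Horb & Hnres & Hy).
    exists y, x, z; split; [exact (orbit_swap_xy p0 (x, y, z) Horb)|auto].
Qed.

(** * Infinite orbits *)

Lemma infinite_orbit_x_avoids p0 : ~ finite_set (orbit p0) ->
  forall L, exists x y z, orbit p0 (x, y, z) /\ ~ In x L.
Proof.
  intros Hinf L; apply NNPP; intros Hno; apply Hinf.
  assert (Hall : forall x y z, orbit p0 (x, y, z) -> In x L).
  { intros x y z Horb; apply NNPP; intros Hx; apply Hno; exists x, y, z; auto. }
  exists (list_prod (list_prod L L) L); intros [[x y] z] Horb.
  apply in_prod; [apply in_prod|].
  - exact (Hall _ _ _ Horb).
  - exact (Hall _ _ _ (orbit_cycle _ _ _ _ Horb)).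
  - exact (Hall _ _ _ (orbit_cycle _ _ _ _ (orbit_cycle _ _ _ _ Horb))).
Qed.

Lemma infinite_orbit_x_nonresonant k p0 M : -2 < k < 2 -> E_k k p0 -> ~ finite_set (orbit p0) ->
  exists a y z, orbit p0 (a, y, z) /\ ~ In a (resonant M) /\ a * a < k + 2.
Proof.
  intros Hk H0 Hinf.
  set (s := sqrt (k + 2)).
  assert (Hs : s * s = k + 2) by (apply sqrt_sqrt; lra).
  destruct (infinite_orbit_x_avoids p0 Hinf (s :: - s :: resonant M)) as (a & y & z & Horb & Ha).
  exists a, y, z; split; [exact Horb|split; [intros Hin; apply Ha; right; right; exact Hin|]].
  pose proof (E_k_x_sq_le k a y z (orbit_E_k k p0 _ ltac:(lra) H0 Horb)).
  destruct (Rle_lt_or_eq_dec _ _ H) as [|Heq]; [assumption|exfalso].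
  assert (Hfact : (a - s) * (a + s) = 0) by nra.
  apply Rmult_integral in Hfact as [?|?]; apply Ha; [left|right; left]; lra.
Qed.

Lemma infinite_orbit_y_nonresonant k p0 M : -2 < k < 2 -> E_k k p0 -> ~ finite_set (orbit p0) ->
  exists x y z, orbit p0 (x, y, z) /\ ~ In y (resonant M) /\ Rabs y <= sqrt (k + 2) / 2.
Proof.
  intros Hk H0 Hinf.
  pose proof PI_RGT_0.
  set (K := 2 ^ S (length (resonant M))).
  assert (HK : 0 < K) by (apply pow_lt; lra).
  destruct (PI_div_INR_lt (/ (4 * K))) as [M1 [HM1 HPI]].
  { apply Rinv_0_lt_compat; lra. }
  destruct (infinite_orbit_x_nonresonant k p0 M1 Hk H0 Hinf) as (a & y0 & z0 & Horb & Hnres & Ha).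
  pose proof (orbit_E_k k p0 _ ltac:(lra) H0 Horb) as HE.
  destruct (level_pt_rep k a y0 z0 ltac:(lra) HE) as [phi0 Hphi0]; rewrite Hphi0 in Horb.
  set (r := ellipse_radius k a).
  assert (Hr : 0 < r) by (apply ellipse_radius_pos; lra).
  assert (Hrs : r <= sqrt (k + 2)) by (apply ellipse_radius_le; lra).
  (* Aim at a point [c] of [[-r2/2, r2/2]] kept at distance [r2 / K] from the resonant
     values; by the choice of [M1] the rotation reaches [c] within [4 r2 PI / M1 < r2 / K]. *)
  set (r2 := Rmin r (sqrt (k + 2) / 2)).
  assert (Hr2 : 0 < r2) by (apply Rmin_pos; [lra|apply Rdiv_lt_0_compat; [apply sqrt_lt_R0|]; lra]).
  assert (Hrr2 : r <= 2 * r2).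
  { unfold r2, Rmin; destruct (Rle_dec r (sqrt (k + 2) / 2)); lra. }
  assert (Hr2r : r2 <= r) by apply Rmin_l.
  assert (Hr2s : r2 <= sqrt (k + 2) / 2) by apply Rmin_r.
  destruct (separated_point (resonant M) (- r2 / 2) (r2 / 2)) as [c (Hlo & Hhi & Hsep)]; [lra|].
  replace (r2 / 2 - - r2 / 2) with r2 in * by field; fold K in Hlo, Hhi, Hsep.
  assert (Hmu : 0 < r2 / K) by (apply Rdiv_lt_0_compat; lra).
  assert (Ha2 : -2 <= a <= 2) by (clear - Hk Ha; split; nra).
  destruct (orbit_level_pt_y_near k p0 a M1 phi0 Ha2 HM1 Hnres Horb c ltac:(fold r; lra) Hr)
    as (y & z & Horb' & Hy).
  fold r in Hy.
  assert (Hclose : Rabs (c - y) < r2 / K).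
  { eapply Rle_lt_trans; [exact Hy|].
    apply Rle_lt_trans with (4 * r2 * (PI / INR M1)).
    - assert (0 < PI / INR M1) by (apply Rdiv_lt_0_compat; [lra|apply lt_0_INR; lia]). nra.
    - replace (r2 / K) with (4 * r2 * / (4 * K)) by (field; lra).
      apply Rmult_lt_compat_l; lra. }
  exists a, y, z; split; [exact Horb'|split].
  - intros Hin; specialize (Hsep y Hin); rewrite Rabs_minus_sym in Hsep; lra.
  - apply Rabs_def2 in Hclose; apply Rabs_le; lra.
Qed.

Lemma infinite_orbit_nonresonant_y_limit k p0 : -2 < k < 2 -> E_k k p0 -> ~ finite_set (orbit p0) ->
  exists b, b * b < k + 2 /\ nonresonant_y_limit p0 b.
Proof.
  intros Hk H0 Hinf.
  set (s := sqrt (k + 2)).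
  assert (Hs : 0 < s) by (apply sqrt_lt_R0; lra).
  destruct (choice (fun M y => (exists x z, orbit p0 (x, y, z) /\ ~ In y (resonant M))
                               /\ - (s / 2) <= y <= s / 2)) as [u Hu].
  { intros M.
    destruct (infinite_orbit_y_nonresonant k p0 M Hk H0 Hinf) as (x & y & z & Horb & Hnres & Hy).
    exists y; split; [exists x, z; auto|].
    unfold Rabs in Hy; destruct Rcase_abs; fold s in Hy; lra. }
  destruct (Bolzano_Weierstrass u _ (compact_P3 (- (s / 2)) (s / 2)) (fun M => proj2 (Hu M)))
    as [b Hb].
  assert (Hnear : forall (eps : posreal) M, exists p, (M <= p)%nat /\ Rabs (u p - b) < eps).
  { intros eps M; apply (Hb (disc b eps) M); exists eps; intros y Hy; exact Hy. }
  exists b; split.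
  - apply Rabs_lt_sqrt; fold s.
    destruct (Hnear (mkposreal (s / 2) ltac:(lra)) 0%nat) as [p [_ Hp]]; cbn in Hp.
    pose proof (proj2 (Hu p)); apply Rabs_def2 in Hp; apply Rabs_def1; lra.
  - intros M eps Heps.
    destruct (Hnear (mkposreal eps Heps) M) as [p [HMp Hp]].
    destruct (Hu p) as [(x & z & Horb & Hnres) _].
    exists x, (u p), z; split; [exact Horb|split; [|exact Hp]].
    intros Hin; apply Hnres, (resonant_mono M p _ HMp Hin).
Qed.

Theorem proposition4p2 (k : R) (p0 : pt) :
  -2 < k < 2 -> E_k k p0 ->
  ~ finite_set (orbit p0) ->
  dense_in (orbit p0) (E_k k).
Proof.
  intros Hk H0 Hinf.
  destruct (infinite_orbit_nonresonant_y_limit k p0 Hk H0 Hinf) as [b [Hb Hlim]].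
  assert (Hx0 : x_slice_adherent k p0 0).
  { apply (x_slice_of_y_slice k p0 0 b Hk H0); [lra|].
    exact (y_slice_of_nonresonant_y_limit k p0 b Hk H0 Hb Hlim). }
  intros [[x y] z] Hxyz.
  pose proof (E_k_x_sq_le k y z x (E_k_cycle k x y z Hxyz)) as Hy.
  destruct (Rle_lt_or_eq_dec _ _ Hy) as [Hy'|Hy'].
  - apply (y_slice_of_x_slice k p0 0 y Hk H0); [lra|exact Hx0|exact Hxyz].
  - pose proof (E_k_x_eq_0_of_y_sq k x y z ltac:(lra) Hxyz Hy'); subst x.
    exact (Hx0 y z Hxyz).
Qed.
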